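(* Let $0<c_1,c_2<1$ and $0<\eta\le 1$ be constants and let $m$ be a sufficiently large integer. Let $H(X,Y,Z)$ be a $3$-partite $3$-uniform hypergraph with $|X|=|Y|=c_1 m$ and $|Z|\geq c_2 2^{m^2}$. If $d_3(Z,(X\times Y))\geq\eta$, then there exists a complete $3$-partite $3$-uniform hypergraph $H'(X',Y',Z')$ that is a subhypergraph of $H$, with $X'\subseteq X$, $Y'\subseteq Y$, $Z'\subseteq Z$ and $|X'|=|Y'|=|Z'|\geq \frac{\eta}{4}\log|X|$.
   Context: A $3$-partite $3$-uniform hypergraph $H(X,Y,Z)$ has vertex set partitioned into $X,Y,Z$ and every edge contains exactly one vertex from each part. $d_3(Z,(X\times Y))$ is the number of edges of $H$ divided by $|X||Y||Z|$. A complete $3$-partite $3$-graph $H'(X',Y',Z')$ contains all triples with one vertex in each of $X',Y',Z'$. $\log$ is base $2$. *)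

From Stdlib Require Export Reals.
From mathcomp Require Export all_boot.
Set Implicit Arguments.
Local Open Scope R_scope. Unset Strict Implicit. Unset Printing Implicit Defensive.

Definition log2 (x : R) : R := ln x / ln 2.

(* A 3-partite 3-uniform hypergraph H(X,Y,Z): parts X, Y, Z live in
   (disjoint) finite types TX, TY, TZ; the edge set E is a set of triples
   (x,y,z) with x in X, y in Y, z in Z. *)
Definition partite3 (TX TY TZ : finType) (X : {set TX}) (Y : {set TY})
  (Z : {set TZ}) (E : {set TX * TY * TZ}) : Prop :=
  forall t, t \in E -> [/\ t.1.1 \in X, t.1.2 \in Y & t.2 \in Z].

Definition d3 (TX TY TZ : finType) (X : {set TX}) (Y : {set TY})
  (Z : {set TZ}) (E : {set TX * TY * TZ}) : R :=
  (INR #|E| / (INR #|X| * INR #|Y| * INR #|Z|)).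

Definition complete_sub (TX TY TZ : finType) (X' : {set TX}) (Y' : {set TY})
  (Z' : {set TZ}) (E : {set TX * TY * TZ}) : Prop :=
  forall x y z, x \in X' -> y \in Y' -> z \in Z' -> (x, y, z) \in E.

(* Read E as a bipartite graph between X and Y x Z.  Averaging and a greedy
   choice give t ~ (eta/4) log2 |X| vertices of X whose common neighbourhood
   in Y x Z has density rho = (eta/2) (eta/4)^t.  The same argument applied to
   this neighbourhood, now a bipartite graph between Y and Z, gives t vertices
   of Y whose common neighbourhood in Z has at least (rho/4)^t (rho/2) |Z|
   elements.  This is still at least t: |Z| >= c2 2^(m^2) is doubly
   exponential in |X|, while rho is only polynomially small in |X|, since
   (eta/4)^t >= (eta/4) |X|^(-gamma) with gamma = 1/(e ln 2) < 1. *)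

From Stdlib Require Import Lra ZArith.
From mathcomp Require Import zify.
Set Implicit Arguments. Unset Strict Implicit.
Open Scope R_scope.

Lemma le_INR_leq (m n : nat) : (m <= n)%N -> INR m <= INR n.
Proof. by move=> /leP; apply: le_INR. Qed.

Lemma INR_le_leq (m n : nat) : INR m <= INR n -> (m <= n)%N.
Proof. by move=> /INR_le /leP. Qed.

Lemma INR_card_sum_ge (I : finType) (A : {pred I}) (f : I -> nat) (r : R) :
  (forall i, i \in A -> r <= INR (f i)) -> INR #|A| * r <= INR (\sum_(i in A) f i).
Proof.
move=> hf; rewrite -sum1_card.
elim/big_ind2: _ => [|x1 x2 y1 y2|i /hf]; rewrite ?plus_INR /=; lra.
Qed.

Lemma card_in_sum (T : finType) (A : {pred T}) (P : pred T) :
  #|[set x in A | P x]| = \sum_(x in A) P x.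
Proof.
rewrite -sum1_card big_mkcond [RHS]big_mkcond; apply: eq_bigr => x _.
by rewrite inE; case: (x \in A); case: (P x).
Qed.

Lemma exists_nat_ceil (a : R) : 0 <= a -> exists k : nat, a <= INR k <= a + 1.
Proof.
move=> a_ge0; have [up_gt up_le] := archimed a.
have up_ge0 : (0 <= up a)%Z by apply: le_IZR; lra.
by exists (Z.to_nat (up a)); rewrite INR_IZR_INZ Z2Nat.id //; lra.
Qed.

Lemma sum_leq_card_ge (I : finType) (B : {pred I}) (f : I -> nat) (d M : nat) :
  (forall i, i \in B -> f i <= M)%N ->
  (\sum_(i in B) f i <= #|[set i in B | d <= f i]| * M + #|B| * d.-1)%N.
Proof.
move=> fM; rewrite (bigID (fun i => d <= f i)%N) /=; apply: leq_add.
  rewrite -sum_nat_const big_mkcond [X in (_ <= X)%N]big_mkcond /=.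
  by apply: leq_sum => i _; rewrite inE; case: andP => // -[/fM].
rewrite big_mkcondr /= -sum_nat_const; apply: leq_sum => i _.
by case: (leqP d (f i)) => //= lt_fd; rewrite -ltnS (ltn_predK lt_fd).
Qed.

Section CommonNeighbourhood.

Variables (TR TC : finType) (F : {set TR * TC}).

Definition codeg (A : {set TR}) (c : TC) : nat := #|[set r in A | (r, c) \in F]|.

Definition common_nbhd (S : {set TR}) (W : {set TC}) : {set TC} :=
  [set c in W | [forall r in S, (r, c) \in F]].

Lemma sum_card_nbhd_codeg (A : {set TR}) (W : {set TC}) :
  \sum_(r in A) #|[set c in W | (r, c) \in F]| = \sum_(c in W) codeg A c.
Proof.
rewrite /codeg.
under eq_bigr do rewrite card_in_sum.
under [RHS]eq_bigr do rewrite card_in_sum.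
exact: exchange_big.
Qed.

Lemma card_bipartite (A : {set TR}) (W : {set TC}) :
  F \subset setX A W -> #|F| = \sum_(c in W) codeg A c.
Proof.
move=> /subsetP FAW.
have -> : #|F| = \sum_(r : TR) \sum_(c : TC) ((r, c) \in F : nat).
  by rewrite pair_big -sum1_card big_mkcond /=; apply: eq_bigr => -[r c].
rewrite -sum_card_nbhd_codeg [RHS]big_mkcond /=; apply: eq_bigr => r _.
case rA: (r \in A); last first.
  by apply: big1 => c _; case rcF: ((r, c) \in F) => //; case/setXP: (FAW _ rcF); rewrite rA.
rewrite card_in_sum [RHS]big_mkcond /=; apply: eq_bigr => c _.
case rcF: ((r, c) \in F); last by case: (c \in W).
by case/setXP: (FAW _ rcF) => _ ->.
Qed.

Lemma codeg_le_setD (A S : {set TR}) (c : TC) :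
  (codeg A c <= codeg (A :\: S) c + #|S|)%N.
Proof.
rewrite /codeg; set B := [set r in A :\: S | (r, c) \in F].
apply: leq_trans (leq_card_setU B S); apply: subset_leq_card.
apply/subsetP => r; rewrite !inE => /andP[rA rcF].
by case: (r \in S); rewrite /= ?orbT ?rA ?rcF.
Qed.

Lemma common_nbhd_setU1 (r : TR) (S : {set TR}) (W : {set TC}) :
  common_nbhd (r |: S) W = [set c in common_nbhd S W | (r, c) \in F].
Proof.
apply/setP => c; rewrite !inE -andbA; congr (_ && _).
apply/forallP/andP => [h | [/forallP h rcF] r'].
  split; last by have := h r; rewrite !inE eqxx.
  by apply/forallP => r'; apply/implyP => r'S; have := h r'; rewrite !inE r'S orbT.
by rewrite !inE; case: eqP => [-> | _]; [rewrite rcF implybT | apply: h].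
Qed.

Lemma common_nbhd_step (A S : {set TR}) (W : {set TC}) (D : R) :
  S \subset A -> (#|S| < #|A|)%N ->
  (forall c, c \in W -> D <= INR (codeg A c)) ->
  exists2 r, r \in A :\: S &
    (D - INR #|S|) * INR #|common_nbhd S W| <= INR #|A| * INR #|common_nbhd (r |: S) W|.
Proof.
move=> SA ltSA degW; set N := common_nbhd S W.
have [r0 r0AS] : exists r, r \in A :\: S.
  by apply/set0Pn; rewrite -card_gt0 cardsD (setIidPr SA) subn_gt0.
pose a r := #|[set c in N | (r, c) \in F]|.
case: (@arg_maxnP _ r0 (mem (A :\: S)) a r0AS) => r rAS r_max.
exists r => //; rewrite common_nbhd_setU1 -/(a r) -mult_INR Rmult_comm.
have codeg_N c : c \in N -> D - INR #|S| <= INR (codeg (A :\: S) c).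
  rewrite inE => /andP[/degW degc _].
  by have := le_INR_leq (codeg_le_setD A S c); rewrite plus_INR; lra.
apply: Rle_trans (INR_card_sum_ge codeg_N) _; apply: le_INR_leq.
rewrite -sum_card_nbhd_codeg; apply: leq_trans (_ : \sum_(r' in A :\: S) a r <= _)%N.
  exact: leq_sum r_max.
by rewrite sum_nat_const leq_mul2r subset_leq_card ?orbT // subsetDl.
Qed.

Lemma common_nbhd_greedy (A : {set TR}) (W : {set TC}) (D : R) (t : nat) :
  (forall c, c \in W -> D <= INR (codeg A c)) -> 2 * INR t <= D -> (t <= #|A|)%N ->
  exists S : {set TR}, [/\ S \subset A, #|S| = t &
    (D / (2 * INR #|A|)) ^ t * INR #|W| <= INR #|common_nbhd S W|].
Proof.
move=> degW tD tA; have: (t <= t)%N by []; elim: {-2}t => [_ | k IH ltkt].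
  exists set0; rewrite sub0set cards0 /= Rmult_1_l; split=> //; apply: le_INR_leq.
  by apply: subset_leq_card; apply/subsetP => c cW; rewrite inE cW; apply/forallP => r; rewrite inE.
have [S [SA cardS bound]] := IH (ltnW ltkt).
have ltSA : (#|S| < #|A|)%N by rewrite cardS; apply: leq_trans tA.
have [r /setDP[rA rS] step] := common_nbhd_step SA ltSA degW.
exists (r |: S); split; first by rewrite subUset sub1set rA.
  by rewrite cardsU1 rS cardS.
have A_gt0 : 0 < INR #|A| by apply: lt_0_INR; apply/ltP; apply: leq_ltn_trans ltSA.
have kD : 2 * INR k.+1 <= D by have := le_INR_leq ltkt; lra.
rewrite cardS S_INR in kD step; have := pos_INR k => k_ge0.
set q := D / (2 * INR #|A|) in bound *.
have q_ge0 : 0 <= q by apply: Rmult_le_pos; [lra | apply/Rlt_le/Rinv_0_lt_compat; lra].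
have Aq : INR #|A| * q = D / 2 by rewrite /q; field; lra.
have N_ge0 := pos_INR #|common_nbhd S W|.
rewrite /= Rmult_assoc; apply: (Rmult_le_reg_l (INR #|A|)) => //.
apply: Rle_trans step; rewrite -Rmult_assoc Aq.
apply: Rle_trans (_ : D / 2 * INR #|common_nbhd S W| <= _).
  by apply: Rmult_le_compat_l bound; lra.
by apply: Rmult_le_compat_r; lra.
Qed.

Lemma codeg_le_card (A : {set TR}) (c : TC) : (codeg A c <= #|A|)%N.
Proof. by apply: subset_leq_card; apply/subsetP => r; rewrite inE => /andP[]. Qed.

Lemma common_nbhd_subset (S : {set TR}) (H W : {set TC}) :
  H \subset W -> common_nbhd S H \subset common_nbhd S W.
Proof. by move=> /subsetP HW; apply/subsetP => c; rewrite !inE => /andP[/HW -> ->]. Qed.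

Lemma dense_common_nbhd (A : {set TR}) (W : {set TC}) (delta : R) (t : nat) :
  F \subset setX A W -> (0 < #|A|)%N -> 0 < delta ->
  delta * INR #|A| * INR #|W| <= INR #|F| ->
  2 * INR t <= delta * INR #|A| / 2 -> (t <= #|A|)%N ->
  exists S : {set TR}, [/\ S \subset A, #|S| = t &
    (delta / 4) ^ t * (delta / 2) * INR #|W| <= INR #|common_nbhd S W|].
Proof.
move=> FAW A_gt0 delta_gt0 dense tD tA; set D := delta * INR #|A| / 2 in tD.
have A_pos : 0 < INR #|A| by apply/lt_0_INR/ltP.
(* Markov's inequality with the integer threshold d = ceil D: the vertices of
   W outside H have codegree at most d - 1 <= D. *)
have [d [Dd dD]] := exists_nat_ceil (ltac:(have := pos_INR t; lra) : 0 <= D).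
have d1D : INR d.-1 <= D.
  by case: d dD {Dd} => [|d]; [rewrite /=; have := pos_INR t | rewrite S_INR succnK]; lra.
set H := [set c in W | d <= codeg A c]%N.
have markov := sum_leq_card_ge d (fun c (_ : c \in W) => codeg_le_card A c).
rewrite -card_bipartite // in markov; have := le_INR_leq markov.
rewrite plus_INR !mult_INR -/H => {}markov.
have H_large : delta / 2 * INR #|W| <= INR #|H|.
  apply: (Rmult_le_reg_l (INR #|A|)) => //.
  have := Rmult_le_compat_l (INR #|W|) _ _ (pos_INR _) d1D; rewrite /D; nra.
have degH c : c \in H -> D <= INR (codeg A c).
  by rewrite inE => /andP[_ /le_INR_leq]; lra.
have [S [SA cardS bound]] := common_nbhd_greedy degH tD tA.
rewrite (_ : D / (2 * INR #|A|) = delta / 4) in bound; last by rewrite /D; field; lra.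
exists S; split=> //; rewrite Rmult_assoc.
apply: Rle_trans (_ : (delta / 4) ^ t * INR #|H| <= _).
  by apply: Rmult_le_compat_l => //; apply: pow_le; lra.
apply: Rle_trans bound _; apply/le_INR_leq/subset_leq_card/common_nbhd_subset.
by apply/subsetP => c; rewrite inE => /andP[].
Qed.

End CommonNeighbourhood.

(* A lower bound for the density, in Y x Z, of the common neighbourhood of
   the t vertices of X chosen first. *)
Definition link_density (eta : R) (t : nat) : R := eta / 2 * (eta / 4) ^ t.

Lemma link_density_bounds (eta : R) (t : nat) :
  0 < eta <= 1 -> 0 < link_density eta t <= eta / 2.
Proof.
move=> eta01; have := pow_incr (eta / 4) 1 t ltac:(lra); rewrite pow1.
have := pow_lt (eta / 4) t ltac:(lra); rewrite /link_density; nra.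
Qed.

Lemma complete_sub_of_dense (TX TY TZ : finType) (X : {set TX}) (Y : {set TY})
    (Z : {set TZ}) (E : {set TX * TY * TZ}) (eta : R) (t : nat) :
  partite3 X Y Z E -> (0 < #|X|)%N -> #|Y| = #|X| -> 0 < eta <= 1 ->
  eta * INR #|X| * INR #|Y| * INR #|Z| <= INR #|E| ->
  2 * INR t <= link_density eta t * INR #|X| / 2 ->
  INR t <= (link_density eta t / 4) ^ t * (link_density eta t / 2) * INR #|Z| ->
  exists (X' : {set TX}) (Y' : {set TY}) (Z' : {set TZ}),
    [/\ X' \subset X, Y' \subset Y, Z' \subset Z, complete_sub X' Y' Z' E &
        [/\ #|X'| = t, #|Y'| = t & #|Z'| = t]].
Proof.
move=> partE X_gt0 cardY eta01 dense tX tZ.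
have [rho_gt0 rho_le] := link_density_bounds t eta01.
set rho := link_density eta t in tX tZ rho_gt0 rho_le.
have X_pos : 0 < INR #|X| by apply/lt_0_INR/ltP.
have t_le : (t <= #|X|)%N by apply: INR_le_leq; nra.
pose assoc (p : TX * TY * TZ) := (p.1.1, (p.1.2, p.2)).
have assoc_inj : injective assoc by move=> [[x y] z] [[x' y'] z'] [-> -> ->].
set F := assoc @: E.
have inF x y z : ((x, (y, z)) \in F) = ((x, y, z) \in E).
  by rewrite (mem_imset _ (x, y, z) assoc_inj).
have FX : F \subset setX X (setX Y Z).
  by apply/subsetP => _ /imsetP[[[x y] z] /partE[/= xX yY zZ] ->]; rewrite !inE /= xX yY zZ.
have [S [S_sub cardS linkS]] : exists S : {set TX}, [/\ S \subset X, #|S| = t &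
    (eta / 4) ^ t * (eta / 2) * INR #|setX Y Z| <= INR #|common_nbhd F S (setX Y Z)|].
  apply: dense_common_nbhd => //; first by lra.
    by rewrite card_imset // cardsX mult_INR -!Rmult_assoc.
  by apply: Rle_trans tX _; apply: Rmult_le_compat_r; nra.
set W := common_nbhd F S (setX Y Z) in linkS.
have WYZ : W \subset setX Y Z by apply/subsetP => c; rewrite inE => /andP[].
have [T [T_sub cardT linkT]] : exists T : {set TY}, [/\ T \subset Y, #|T| = t &
    (rho / 4) ^ t * (rho / 2) * INR #|Z| <= INR #|common_nbhd W T Z|].
  apply: dense_common_nbhd; rewrite ?cardY //.
  rewrite cardsX mult_INR cardY in linkS; apply: Rle_trans linkS.
  by rewrite /rho /link_density; apply: Req_le; ring.
have /card_geqP[s [s_uniq size_s sU]] : (t <= #|common_nbhd W T Z|)%N.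
  by apply: INR_le_leq; lra.
exists S, T, [set z in s]; split => //.
- by apply/subsetP => z; rewrite inE => /sU; rewrite inE => /andP[].
- move=> x y z xS yT; rewrite inE => /sU; rewrite inE => /andP[_ /forallP/(_ y)].
  rewrite yT inE => /andP[_ /forallP/(_ x)]; by rewrite xS inF.
- by split => //; rewrite cardsE (card_uniqP s_uniq).
Qed.

Lemma exp_le_exp (x y : R) : x <= y -> exp x <= exp y.
Proof. by case=> [/exp_increasing|->]; lra. Qed.

Lemma ln_le_sub1 (x : R) : 0 < x -> ln x <= x - 1.
Proof. by move=> x_gt0; have := exp_ineq1_le (ln x); rewrite exp_ln //; lra. Qed.

Lemma xlnx_ge (x : R) : 0 < x -> - / exp 1 <= x * ln x.
Proof.
move=> x_gt0; have e_gt0 := exp_pos 1.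
have := ln_le_sub1 (ltac:(apply: Rinv_0_lt_compat; nra) : 0 < / (x * exp 1)).
rewrite ln_Rinv ?ln_mult ?ln_exp; try nra.
move=> h; have := Rmult_le_compat_l x _ _ (Rlt_le _ _ x_gt0) h.
have -> : x * (/ (x * exp 1) - 1) = / exp 1 - x by field; lra.
lra.
Qed.

(* gamma = log2(e) / e is the maximum of x log2 (1/x) over x > 0. *)
Definition gamma : R := / (exp 1 * ln 2).

Lemma gamma_bounds : 0 < gamma < 1.
Proof.
have e_gt2 : 2 < exp 1 by have := exp_ineq1 1 ltac:(lra); lra.
have ln2_gt := ln_lt_2.
have gt1 : 1 < exp 1 * ln 2 by nra.
split; first by apply: Rinv_0_lt_compat; lra.
by rewrite -Rinv_1; apply: Rinv_lt_contravar; lra.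
Qed.

Lemma pow_ge_exp_gamma (e u : R) (t : nat) :
  0 < e < 1 -> 0 <= u -> INR t <= e * (u / ln 2) + 1 -> e * exp (- gamma * u) <= e ^ t.
Proof.
move=> e01 u_ge0 t_le; have ln2_gt := ln_lt_2.
have ln_e_lt0 : ln e < 0 by rewrite -ln_1; apply: ln_increasing; lra.
have u2_ge0 : 0 <= u / ln 2 by apply: Rmult_le_pos => //; apply/Rlt_le/Rinv_0_lt_compat; lra.
have elne := xlnx_ge (proj1 e01).
have : ln e - gamma * u <= INR t * ln e.
  have -> : gamma * u = u / ln 2 * / exp 1 by rewrite /gamma; field; have := exp_pos 1; lra.
  apply: Rle_trans (_ : (e * (u / ln 2) + 1) * ln e <= _); last by nra.
  have := Rmult_le_compat_l _ _ _ u2_ge0 elne; lra.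
move=> /exp_le_exp; rewrite -Rpower_pow; last lra.
rewrite /Rpower (_ : ln e - gamma * u = ln e + - gamma * u) ?exp_plus ?exp_ln //; lra.
Qed.

Lemma linear_le_exp (A B c u : R) :
  0 < c -> 0 <= B <= u -> 4 * (A + 1) <= c * c * u -> A * u + B <= exp (c * u).
Proof.
move=> c_gt0 Bu Au.
have half := exp_ineq1_le (c * u / 2).
have -> : exp (c * u) = exp (c * u / 2) * exp (c * u / 2) by rewrite -exp_plus; f_equal; lra.
have : 0 <= c * u by nra.
nra.
Qed.

(* [exp u] stands for |X|, and t for a ceiling of e log2 |X|. *)
Lemma exp_dominates_log_size (e u : R) (t : nat) : 0 < e <= 1 / 4 ->
  2 / (e * e) <= u -> 4 * (2 / (e * ln 2) + 1) <= (1 - gamma) * (1 - gamma) * u ->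
  INR t <= e * (u / ln 2) + 1 ->
  2 * INR t <= e * e ^ t * exp u /\ 2 <= e * e ^ t * exp u * exp u.
Proof.
move=> e_bounds Bu Au t_le; have ln2_gt := ln_lt_2; have [_ gamma_lt1] := gamma_bounds.
set c := 1 - gamma in Au; set A := 2 / (e * ln 2) in Au; set B := 2 / (e * e) in Bu.
have ee_gt0 : 0 < e * e by nra.
have B_gt0 : 0 < B by rewrite /B; apply: Rdiv_lt_0_compat; lra.
have lin := linear_le_exp (ltac:(rewrite /c; lra) : 0 < c) (conj (Rlt_le _ _ B_gt0) Bu) Au.
have pow_ge := pow_ge_exp_gamma (ltac:(lra) : 0 < e < 1) (ltac:(lra) : 0 <= u) t_le.
have key : e * e * exp (c * u) <= e * e ^ t * exp u.
  rewrite (_ : c * u = - gamma * u + u); last by rewrite /c; ring.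
  have eu_ge0 : 0 <= e * exp u by have := exp_pos u; nra.
  have := Rmult_le_compat_l _ _ _ eu_ge0 pow_ge; rewrite exp_plus.
  by move=> h; apply: (Rle_trans _ _ _ (Rle_trans _ _ _ (Req_le _ _ _) h) (Req_le _ _ _)); ring.
have lin_e : 2 * (e * (u / ln 2) + 1) <= e * e * exp (c * u).
  have := Rmult_le_compat_l _ _ _ (Rlt_le _ _ ee_gt0) lin.
  by rewrite (_ : e * e * (A * u + B) = 2 * (e * (u / ln 2) + 1)) /A /B //; field; lra.
have log_ge0 : 0 <= e * (u / ln 2).
  by apply: Rmult_le_pos; [|apply: Rmult_le_pos; [|apply/Rlt_le/Rinv_0_lt_compat]]; lra.
have exp_u_ge1 : 1 <= exp u by rewrite -exp_0; apply: exp_le_exp; lra.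
split; nra.
Qed.

Lemma link_density_log_bounds (eta : R) : 0 < eta <= 1 ->
  exists N : nat, forall n : nat, (N <= n)%N -> exists t : nat,
    [/\ eta / 4 * log2 (INR n) <= INR t, (4 * t.+1 <= n)%N,
        2 * INR t <= link_density eta t * INR n / 2 &
        / (INR n * INR n) <= link_density eta t / 4].
Proof.
move=> eta_bounds; set e := eta / 4; have ln2_gt := ln_lt_2; have [_ gamma_lt1] := gamma_bounds.
set U := Rmax (2 / (e * e)) (4 * (2 / (e * ln 2) + 1) / ((1 - gamma) * (1 - gamma))).
have [N N_gt] := INR_unbounded (Rmax (exp U) 8).
exists N => n Nn; have n_ge : Rmax (exp U) 8 <= INR n by have := le_INR_leq Nn; lra.
have [nU n8] : exp U <= INR n /\ 8 <= INR n.
  by split; apply: Rle_trans n_ge; [apply: Rmax_l | apply: Rmax_r].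
set u := ln (INR n); have exp_u : exp u = INR n by rewrite /u exp_ln //; lra.
have Uu : U <= u by apply: Rnot_lt_le => /exp_increasing; lra.
have u_ge0 : 0 <= u by rewrite /u -ln_1; apply/Rlt_le/ln_increasing; lra.
have log_ge0 : 0 <= e * (u / ln 2).
  apply: Rmult_le_pos; first by rewrite /e; lra.
  by apply: Rmult_le_pos; [|apply/Rlt_le/Rinv_0_lt_compat]; lra.
have [t [t_ge t_le]] := exists_nat_ceil log_ge0.
have Bu : 2 / (e * e) <= u by apply: Rle_trans Uu; apply: Rmax_l.
have Au : 4 * (2 / (e * ln 2) + 1) <= (1 - gamma) * (1 - gamma) * u.
  have cc_gt0 : 0 < (1 - gamma) * (1 - gamma) by nra.
  have := Rmult_le_compat_l _ _ _ (Rlt_le _ _ cc_gt0) (Rle_trans _ _ _ (Rmax_r _ _) Uu).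
  by rewrite /Rdiv (Rmult_comm _ (/ _)) -Rmult_assoc Rinv_r ?Rmult_1_l; lra.
have [tn two] := exp_dominates_log_size (ltac:(rewrite /e; lra) : 0 < e <= 1 / 4) Bu Au t_le.
rewrite exp_u in tn two.
have rho_eq : link_density eta t = 2 * (e * e ^ t) by rewrite /link_density /e; field.
exists t; rewrite rho_eq; split => //.
- have e01 : 0 <= e <= 1 by rewrite /e; lra.
  have eet : e * e ^ t <= 1 / 4.
    by have := pow_le e t (proj1 e01); have := pow_incr e 1 t e01; rewrite pow1 /e; nra.
  have := Rmult_le_compat_r (INR n) _ _ (pos_INR n) eet => ?.
  by apply: INR_le_leq; rewrite mult_INR (S_INR t) (_ : INR 4 = 4); [lra | rewrite /=; ring].
- lra.
- have nn_inv : 0 < / (INR n * INR n) by apply: Rinv_0_lt_compat; nra.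
  have := Rmult_le_compat_l _ _ _ (Rlt_le _ _ nn_inv) two.
  by rewrite (_ : / (INR n * INR n) * (e * e ^ t * INR n * INR n) = e * e ^ t); [lra | field; lra].
Qed.

Lemma pow2_ge_sq (m : nat) : (4 <= m)%N -> INR m * INR m <= 2 ^ m.
Proof.
move=> /subnK <-; elim: (m - 4)%N => [|k IH]; first by rewrite /=; lra.
rewrite addSn S_INR /=; have : 4 <= INR (k + 4) by rewrite plus_INR /=; have := pos_INR k; lra.
nra.
Qed.

Lemma link_density_exp2_sq_ge (c2 rho K : R) (n m t : nat) :
  1 <= c2 * INR m -> (4 <= m)%N -> (n <= m)%N -> (4 * t.+1 <= n)%N ->
  / (INR n * INR n) <= rho / 4 -> c2 * 2 ^ (m * m) <= K ->
  INR t <= (rho / 4) ^ t * (rho / 2) * K.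
Proof.
move=> c2m m4 nm tn nq c2K; set q := rho / 4 in nq.
have -> : (rho / 4) ^ t * (rho / 2) * K = 2 * q ^ t.+1 * K by rewrite /q /=; field.
have n4 : (4 <= n)%N by lia.
have n_gt0 : 0 < INR n by apply: lt_0_INR; apply/ltP; lia.
have pow_gt0 k : 0 < 2 ^ k by apply: pow_lt; lra.
have m_ge0 := pos_INR m.
have c2_gt0 : 0 < c2 by apply: Rnot_le_lt => c2_le0; nra.
have q_ge : / 2 ^ (n * t.+1) <= q ^ t.+1.
  rewrite pow_mult -pow_inv; apply: pow_incr; split; first by apply/Rlt_le/Rinv_0_lt_compat.
  by apply: Rle_trans nq; apply: Rinv_le_contravar; [nra | apply: pow2_ge_sq].
have K_ge : c2 * 2 ^ m * 2 ^ (n * t.+1) <= K.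
  apply: Rle_trans c2K; rewrite Rmult_assoc -pow_add.
  by apply: Rmult_le_compat_l; [nra | apply: Rle_pow; [lra | nia]].
have m_le : INR m <= c2 * 2 ^ m.
  by have := Rmult_le_compat_r _ _ _ m_ge0 c2m; have := pow2_ge_sq m4; nra.
have t_le : INR t <= INR m by apply: le_INR_leq; lia.
have c2m_pos : 0 <= c2 * 2 ^ m * 2 ^ (n * t.+1).
  by apply/Rlt_le/Rmult_lt_0_compat; [apply: Rmult_lt_0_compat|].
have := Rmult_le_compat _ _ _ _ (Rlt_le _ _ (Rinv_0_lt_compat _ (pow_gt0 _))) c2m_pos q_ge K_ge.
rewrite (_ : / 2 ^ (n * t.+1) * (c2 * 2 ^ m * 2 ^ (n * t.+1)) = c2 * 2 ^ m); first lra.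
by field; have := pow_gt0 (n * t.+1)%N; lra.
Qed.

Lemma eventually_large (c1 c2 : R) (N : nat) : 0 < c1 < 1 -> 0 < c2 ->
  exists M : nat, forall m n : nat, (M <= m)%N -> INR n = c1 * INR m ->
    [/\ (N <= n)%N, (n <= m)%N, (4 <= m)%N & 1 <= c2 * INR m].
Proof.
move=> c1_bounds c2_gt0; have [M M_gt] := INR_unbounded (INR N / c1 + 4 + / c2).
exists M => m n Mm n_eq.
have N_c1 : 0 <= INR N / c1.
  by apply: Rmult_le_pos; [apply: pos_INR | apply/Rlt_le/Rinv_0_lt_compat; lra].
have inv_c2 : 0 < / c2 by apply: Rinv_0_lt_compat.
have m_gt : INR N / c1 + 4 + / c2 < INR m by have := le_INR_leq Mm; lra.
split.
- apply: INR_le_leq; rewrite n_eq.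
  have := Rmult_le_compat_l c1 (INR N / c1) (INR m) ltac:(lra) ltac:(lra).
  by rewrite (_ : c1 * (INR N / c1) = INR N); [lra | field; lra].
- by apply: INR_le_leq; rewrite n_eq; have := pos_INR m; nra.
- by apply: INR_le_leq; rewrite (_ : INR 4 = 4); [lra | rewrite /=; ring].
- have := Rmult_le_compat_l c2 (/ c2) (INR m) ltac:(lra) ltac:(lra).
  by rewrite Rinv_r; lra.
Qed.

Lemma d3_ge_card (TX TY TZ : finType) (X : {set TX}) (Y : {set TY}) (Z : {set TZ})
    (E : {set TX * TY * TZ}) (eta : R) :
  (0 < #|X|)%N -> (0 < #|Y|)%N -> (0 < #|Z|)%N -> d3 X Y Z E >= eta ->
  eta * INR #|X| * INR #|Y| * INR #|Z| <= INR #|E|.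
Proof.
move=> /ltP/lt_0_INR X_gt0 /ltP/lt_0_INR Y_gt0 /ltP/lt_0_INR Z_gt0.
have XYZ_gt0 : 0 < INR #|X| * INR #|Y| * INR #|Z| by do 2![apply: Rmult_lt_0_compat => //].
rewrite /d3 => /Rge_le /(Rmult_le_compat_r _ _ _ (Rlt_le _ _ XYZ_gt0)).
rewrite /Rdiv [X in _ <= X]Rmult_assoc Rinv_l ?Rmult_1_r; last lra.
by rewrite -!Rmult_assoc.
Qed.

Theorem lemma4 (c1 c2 eta : R) :
  0 < c1 < 1 -> 0 < c2 < 1 -> 0 < eta <= 1 ->
  exists M : nat, forall m : nat, (M <= m)%N ->
  forall (TX TY TZ : finType) (X : {set TX}) (Y : {set TY}) (Z : {set TZ})
         (E : {set TX * TY * TZ}),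
    partite3 X Y Z E ->
    INR #|X| = c1 * INR m ->
    INR #|Y| = c1 * INR m ->
    INR #|Z| >= c2 * 2 ^ (m * m)%N ->
    d3 X Y Z E >= eta ->
    exists (X' : {set TX}) (Y' : {set TY}) (Z' : {set TZ}),
      [/\ X' \subset X, Y' \subset Y, Z' \subset Z,
          complete_sub X' Y' Z' E &
          [/\ #|X'| = #|Y'|, #|Y'| = #|Z'| &
               INR #|X'| >= eta / 4 * log2 (INR #|X|)]].
Proof.
move=> c1_bounds c2_bounds eta_bounds.
have [N sizeN] := link_density_log_bounds eta_bounds.
have [M largeM] := eventually_large N c1_bounds (proj1 c2_bounds).
exists M => m Mm TX TY TZ X Y Z E partE cardX cardY /Rge_le cardZ dense.
have [N_n n_m m4 c2m] := largeM m #|X| Mm cardX.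
have [t [t_ge t_n t_rho n_rho]] := sizeN _ N_n.
have cardYX : #|Y| = #|X| by apply: INR_eq; lra.
have X_gt0 : (0 < #|X|)%N by lia.
have Z_gt0 : (0 < #|Z|)%N.
  apply/ltP/INR_lt; apply: Rlt_le_trans cardZ.
  by apply: Rmult_lt_0_compat; [lra | apply: pow_lt; lra].
have denseE := d3_ge_card X_gt0 (ltac:(by rewrite cardYX) : (0 < #|Y|)%N) Z_gt0 dense.
have Z_rho := link_density_exp2_sq_ge c2m m4 n_m t_n n_rho cardZ.
have [X' [Y' [Z' [X'X Y'Y Z'Z complete [cardX' cardY' cardZ']]]]] :=
  complete_sub_of_dense partE X_gt0 cardYX eta_bounds denseE t_rho Z_rho.
exists X', Y', Z'; split => //; rewrite cardX' cardY' cardZ'; split => //.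
exact: Rle_ge.
Qed.
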